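(* Let $d\ge 2$. (a) Every domain $D\subset T_d$ with $|D|\le d$ is optimal. (b) Every full domain in $T_d$ is optimal. (c) If $D\subset T_d$ is a domain with $|D|\ge 2$ and $|R(D)|=1$, then $D$ is optimal. (d) If $D\subset T_d$ is an optimal domain with $|D|\ge 2$, then $|R(D)|\le d-2$.
   Context: $T_d$ is the $d$-regular tree (connected, acyclic, every vertex of degree $d$). A domain is a finite nonempty connected set $D$ of vertices of $T_d$, identified with its induced subgraph. For $x\in D$, $\deg_D(x)$ is the number of neighbours of $x$ lying in $D$. The (inner vertex) boundary is $\partial D=\{x\in D:\deg_D(x)<d\}$. For $k\ge1$, $I_d(k)=\min\{|\partial D| : D\subset T_d \text{ a domain with } |D|=k\}$, and a domain $D$ is optimal if $|\partial D|=I_d(|D|)$. For a domain with $|D|\ge 2$: the leaves are $L(D)=\{x\in\partial D:\deg_D(x)=1\}$, the residual boundary is $R(D)=\{x\in\partial D: 2\le \deg_D(x)\le d-1\}$, and $D$ is full if $R(D)=\emptyset$ (equivalently $\partial D=L(D)$). *)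

From HB Require Import structures.
From mathcomp Require Import all_boot finmap.
Set Implicit Arguments. Unset Strict Implicit. Unset Printing Implicit Defensive.
Local Open Scope fset_scope.

(* A vertex is a sequence of naturals [a0; a1; ...; ak]
   with a0 < d and ai < d-1 for i >= 1.  The root is [::]; the root has the d
   children [:: i] (i < d); a non-root vertex x has the d-1 children rcons x j
   (j < d-1) and one parent, hence degree d. *)
Definition vertex := seq nat.

Definition is_vertex (d : nat) (x : vertex) : bool :=
  match x with
  | [::] => true
  | a :: s => (a < d) && all (fun b => b < d.-1) s
  end.

Definition parent_of (u v : vertex) : bool :=
  (size v == (size u).+1) && (take (size u) v == u).

Definition adj (u v : vertex) : bool := parent_of u v || parent_of v u.

Definition connected_in (D : {fset vertex}) : Prop :=
  forall x y, x \in D -> y \in D ->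
    exists p : seq vertex, [/\ path adj x p, last x p = y & all (fun z => z \in D) p].

Definition domain (d : nat) (D : {fset vertex}) : Prop :=
  [/\ D != fset0, all (is_vertex d) D & connected_in D].

Definition degD (D : {fset vertex}) (x : vertex) : nat := #|` [fset y in D | adj x y]|.

Definition bdry (d : nat) (D : {fset vertex}) : {fset vertex} :=
  [fset x in D | degD D x < d].

(* D is optimal iff |bdry D| = I_d(|D|) = min over domains D' with |D'| = |D|
   of |bdry D'|; i.e. |bdry D| <= |bdry D'| for all such D' (D itself is one). *)
Definition optimal (d : nat) (D : {fset vertex}) : Prop :=
  forall D', domain d D' -> #|` D'| = #|` D| -> #|` bdry d D| <= #|` bdry d D'|.

Definition leaves (d : nat) (D : {fset vertex}) : {fset vertex} :=
  [fset x in bdry d D | degD D x == 1].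

Definition resid (d : nat) (D : {fset vertex}) : {fset vertex} :=
  [fset x in bdry d D | (2 <= degD D x) && (degD D x <= d.-1)].

Definition full (d : nat) (D : {fset vertex}) : Prop := resid d D = fset0.

(* Summing degrees over a domain D with k vertices, b of them on the boundary, gives
   2(k - 1) = d(k - b) + b + E, where the excess E is the sum of deg - 1 over the
   boundary.  Leaves contribute nothing to E and each residual vertex between 1 and
   d - 2, so |R(D)| <= E <= (d - 2)|R(D)|.  Since (d - 1)b = E + (d - 2)k + 2, among
   domains of a given size b is determined by E up to rounding: E <= d - 2 (full
   domains, or a single residual vertex) forces optimality, and an optimal domain has
   E at most that of a domain grown leaf by leaf from the root, always at a residual
   vertex when there is one, which never has more than one residual vertex. *)

From mathcomp Require Import all_boot finmap zify.
Set Implicit Arguments. Unset Strict Implicit.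
Local Open Scope fset_scope.
Local Open Scope nat_scope.

Lemma card_fset_sep (D : {fset vertex}) (P : pred vertex) :
  #|` [fset y in D | P y]| = count P D.
Proof. by rewrite -sum1_size -big_fset_condE sum1_count. Qed.

Lemma degD_count D x : degD D x = count (adj x) D.
Proof. exact: card_fset_sep. Qed.

Lemma parent_of_size u v : parent_of u v -> size v = (size u).+1.
Proof. by case/andP => /eqP. Qed.

Lemma parent_of_take u v : parent_of u v -> u = take (size u) v.
Proof. by case/andP => _ /eqP. Qed.

Lemma parent_of_uniq u1 u2 v : parent_of u1 v -> parent_of u2 v -> u1 = u2.
Proof.
move=> h1 h2; rewrite (parent_of_take h1) (parent_of_take h2).
by have := parent_of_size h1; rewrite (parent_of_size h2) => -[->].
Qed.

Lemma parent_of_asym u v : parent_of u v -> parent_of v u = false.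
Proof.
move=> h; apply/negP => /parent_of_size; rewrite (parent_of_size h); lia.
Qed.

Lemma parent_of_rcons x j : parent_of x (rcons x j).
Proof. by rewrite /parent_of size_rcons eqxx /= -cats1 (take_size_cat _ (erefl _)). Qed.

Lemma parent_of_rconsE x y : parent_of x y -> y = rcons x (nth 0 y (size x)).
Proof.
move=> h; rewrite -[y in LHS](cat_take_drop (size x)) -(parent_of_take h) -cats1.
congr (_ ++ _); have : size (drop (size x) y) = 1.
  by rewrite size_drop (parent_of_size h) subSnn.
case E: (drop (size x) y) => [|a [|b t]] //= _.
by rewrite -[size x]addn0 -nth_drop E.
Qed.

Lemma adj_sym u v : adj u v = adj v u.
Proof. by rewrite /adj orbC. Qed.

Lemma adj_irr u : adj u u = false.
Proof. by rewrite /adj /parent_of orbb; case: eqP => // /n_Sn. Qed.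

Lemma count_adj x (s : seq vertex) :
  count (adj x) s = count (parent_of x) s + count (parent_of^~ x) s.
Proof.
rewrite -count_predUI -[LHS]addn0; congr (_ + _).
apply/esym/eqP; rewrite eqn0Ngt -has_count; apply/hasPn => y _ /=.
by apply/negP => /andP [/parent_of_asym ->].
Qed.

Lemma count_parent_le1 x (s : seq vertex) : uniq s -> count (parent_of^~ x) s <= 1.
Proof.
move=> us; apply: (@leq_trans (count (pred1 (take (size x).-1 x)) s)).
  by apply: sub_count => y h; apply/eqP; rewrite (parent_of_take h) (parent_of_size h).
by rewrite count_uniq_mem //; case: (_ \in _).
Qed.

Lemma count_parent_root (s : seq vertex) : count (parent_of^~ [::]) s = 0.
Proof.
by apply/eqP; rewrite eqn0Ngt -has_count; apply/hasPn => y _; apply/negP => /parent_of_size.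
Qed.

Lemma path_exit (T : eqType) (e : rel T) (P : pred T) x p :
  path e x p -> P x -> ~~ P (last x p) ->
  exists u v, [/\ e u v, P u, ~~ P v & v \in p].
Proof.
elim: p x => [|z p IH] x /=; first by move=> _ ->.
case/andP => exz pz Px Pl; case Pz: (P z); last by exists x, z; rewrite Pz inE eqxx.
have [u [v [euv Pu Pv vp]]] := IH z pz Pz Pl.
by exists u, v; rewrite inE vp orbT.
Qed.

Lemma size_take_prefix (x u : vertex) : take (size x) u = x -> size x <= size u.
Proof. by move=> h; rewrite -{1}h size_take_min geq_minr. Qed.

Lemma exists_min_size (D : {fset vertex}) : D != fset0 ->
  exists2 t, t \in D & forall z, z \in D -> size t <= size z.
Proof.
case/fset0Pn => z zD.
have ex : exists n, has (fun x : vertex => size x == n) D.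
  by exists (size z); apply/hasP; exists z.
have [m /hasP [t tD /eqP <-] m_min] := find_ex_minn ex.
by exists t => // y yD; apply: m_min; apply/hasP; exists y.
Qed.

Section ConnectedDomain.

Variables (D : {fset vertex}) (t : vertex).
Hypotheses (cD : connected_in D) (tD : t \in D)
  (t_min : forall z, z \in D -> size t <= size z).

Lemma exists_parent_in x : x \in D -> x != t -> exists2 y, y \in D & parent_of y x.
Proof.
move=> xD xt; have [p [pp lp pD]] := cD xD tD.
(* A path from x to t leaves the subtree below x, which it can only do through the
   parent of x. *)
pose below := fun z : vertex => take (size x) z == x.
have below_x : below x by rewrite /below take_size.
have below_t : ~~ below (last x p).
  rewrite lp; apply: contra xt => /eqP tx.
  have /eqP sx : size t == size x by rewrite eqn_leq t_min // size_take_prefix.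
  by rewrite -tx -sx take_size.
have [u [v [uv /eqP ux vx vp]]] := path_exit pp below_x below_t.
have vD : v \in D by move/allP: pD; apply.
have sxu := size_take_prefix ux.
case/orP: uv => h.
  by rewrite /below -(take_takel v sxu) -(parent_of_take h) ux eqxx in vx.
exists v => //; have suv := parent_of_size h.
case: (leqP (size x) (size v)) => sxv.
  by rewrite /below (parent_of_take h) take_takel // ux eqxx in vx.
have sx : size x = size u by apply/eqP; rewrite eqn_leq sxu suv.
by rewrite -ux sx take_size.
Qed.

Lemma count_parent_in y : y \in D -> count (parent_of^~ y) D = (y != t).
Proof.
move=> yD; have [->|yt] := eqVneq y t.
  apply/eqP; rewrite eqn0Ngt -has_count; apply/hasPn => x xD.
  by apply/negP => /parent_of_size st; have := t_min xD; rewrite st ltnn.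
have [x xD hx] := exists_parent_in yD yt.
apply/eqP; rewrite eqn_leq count_parent_le1 ?fset_uniq // -has_count.
by apply/hasP; exists x.
Qed.

End ConnectedDomain.

Lemma sum_degD (D : {fset vertex}) : D != fset0 -> connected_in D ->
  \sum_(x <- D) degD D x = 2 * (#|` D| - 1).
Proof.
move=> D0 cD; have [t tD t_min] := exists_min_size D0.
have count_parents : \sum_(y <- D) count (parent_of^~ y) D = #|` D| - 1.
  rewrite big_seq (eq_bigr (fun y => (y != t) : nat)); last first.
    by move=> y yD; rewrite (count_parent_in cD tD t_min yD).
  rewrite -big_seq -big_mkcond sum1_count /=.
  by rewrite -(count_predC (pred1 t)) count_uniq_mem ?fset_uniq // tD add1n subn1.
under eq_bigr => x _ do rewrite degD_count count_adj.
rewrite big_split /= count_parents mul2n -addnn; congr (_ + _).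
rewrite -count_parents; under eq_bigr => x _ do rewrite -sum1_count big_mkcond /=.
rewrite exchange_big /=; apply: eq_bigr => y _.
by rewrite -big_mkcond sum1_count.
Qed.

Definition nchildren (d : nat) (v : vertex) : nat := if v is [::] then d else d.-1.

Lemma is_vertex_rcons d v j :
  is_vertex d (rcons v j) = is_vertex d v && (j < nchildren d v).
Proof. by case: v => [|a s] /=; rewrite ?andbT // all_rcons (andbC (j < _)) andbA. Qed.

Lemma count_children_le d x (s : seq vertex) : uniq s -> all (is_vertex d) s ->
  count (parent_of x) s <= nchildren d x.
Proof.
move=> us vs; pose label y : nat := nth 0 y (size x).
rewrite -size_filter -(size_map label) -[nchildren d x](size_iota 0).
apply: uniq_leq_size.
  rewrite map_inj_in_uniq ?filter_uniq // => y1 y2.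
  rewrite !mem_filter => /andP [h1 _] /andP [h2 _] e.
  by rewrite (parent_of_rconsE h1) (parent_of_rconsE h2) -/(label y1) e.
move=> a /mapP [y]; rewrite mem_filter => /andP [h ys] ->.
have := allP vs y ys; rewrite {1}(parent_of_rconsE h) is_vertex_rcons.
by rewrite mem_iota add0n => /andP [].
Qed.

Lemma degD_le d (D : {fset vertex}) x : 0 < d -> all (is_vertex d) D -> degD D x <= d.
Proof.
move=> d_gt0 vD; rewrite degD_count count_adj.
have children := count_children_le x (fset_uniq D) vD.
case: x children => [|a s] children; first by rewrite count_parent_root addn0.
rewrite -[d](prednK d_gt0) -addn1.
exact: leq_add children (count_parent_le1 _ (fset_uniq D)).
Qed.

Lemma degD_gt0 (D : {fset vertex}) x : connected_in D -> 2 <= #|` D| -> x \in D ->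
  0 < degD D x.
Proof.
move=> cD D2 xD; have : D `\ x != fset0.
  by move: D2; rewrite (cardfsD1 x) xD add1n ltnS cardfs_gt0.
case/fset0Pn => y; rewrite in_fsetD1 => /andP [yx yD].
have [[|z p] [/= pp lp pD]] := cD x y xD yD; first by rewrite lp eqxx in yx.
case/andP: pp => xz _; case/andP: pD => zD _.
by rewrite degD_count -has_count; apply/hasP; exists z.
Qed.

Lemma bdry_small d (D : {fset vertex}) : #|` D| <= d -> bdry d D = D.
Proof.
move=> Dd; apply/fsetP => x; rewrite !inE; case: (boolP (x \in D)) => //= xD.
apply: (leq_trans _ Dd); rewrite (cardfsD1 x D) xD add1n ltnS.
apply: fsubset_leq_card; apply/fsubsetP => y; rewrite !inE => /andP [yD xy].
by rewrite yD andbT; apply: contraTneq xy => ->; rewrite adj_irr.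
Qed.

Definition excess (d : nat) (D : {fset vertex}) : nat :=
  \sum_(x <- bdry d D) (degD D x).-1.

Lemma card_residE d D :
  #|` resid d D| = \sum_(x <- bdry d D) (2 <= degD D x <= d.-1).
Proof.
rewrite -sum1_size -big_fset_condE big_mkcond /=.
by apply: eq_bigr => x _; case: ifP.
Qed.

Lemma card_resid_le_excess d D : #|` resid d D| <= excess d D.
Proof.
rewrite card_residE; apply: leq_sum => x _.
by case/boolP: (_ < _ <= _) => [/andP [h _]|] //=; lia.
Qed.

Lemma excess_le_card_resid d D : excess d D <= (d - 2) * #|` resid d D|.
Proof.
rewrite /excess card_residE big_distrr /= big_seq [leqRHS]big_seq; apply: leq_sum => x.
rewrite !inE => /andP [_]; set n := degD D x => deg_lt.
case/boolP: (1 < n <= d.-1) => [/andP [n2 _]|]; first lia.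
by case/nandP; rewrite -?leqNgt -?ltnNge; lia.
Qed.

Lemma excess_identity d D : 0 < d -> domain d D -> 2 <= #|` D| ->
  excess d D + #|` bdry d D| + d * (#|` D| - #|` bdry d D|) = 2 * (#|` D| - 1).
Proof.
move=> d_gt0 [D0 vD cD] D2.
rewrite -sum_degD // (big_fsetID _ (fun x => degD D x < d)) /=; congr (_ + _).
  rewrite /excess -sum1_size -big_split /= big_seq [RHS]big_seq.
  apply: eq_bigr => x; rewrite !inE => /andP [xD _].
  by rewrite addn1 prednK // degD_gt0.
have interior_deg x : x \in [fset x in D | ~~ (degD D x < d)] -> degD D x = d.
  by rewrite !inE -leqNgt => /andP [_ ge]; apply/eqP; rewrite eqn_leq degD_le.
rewrite big_seq (eq_bigr (fun=> d)) // -big_seq big_const_seq iter_addn_0.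
rewrite count_predT card_fset_sep /bdry card_fset_sep.
by rewrite -(count_predC (fun x => degD D x < d) D) addKn.
Qed.

Lemma card_bdry_le d D : #|` bdry d D| <= #|` D|.
Proof. by apply: fsubset_leq_card; rewrite /bdry fset_sub. Qed.

(* By excess_identity, (d - 1)|bdry| - excess depends only on the size of the domain. *)
Section CompareDomains.

Variables (d : nat) (D D' : {fset vertex}).
Hypotheses (d2 : 2 <= d) (dD : domain d D) (dD' : domain d D')
  (D2 : 2 <= #|` D|) (eqD : #|` D'| = #|` D|).

Let identities :
  [/\ excess d D + #|` bdry d D| + d * (#|` D| - #|` bdry d D|) = 2 * (#|` D| - 1),
      excess d D' + #|` bdry d D'| + d * (#|` D| - #|` bdry d D'|) = 2 * (#|` D| - 1),
      #|` bdry d D| <= #|` D| & #|` bdry d D'| <= #|` D|].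
Proof.
have := excess_identity (ltnW d2) dD D2.
have D2' : 2 <= #|` D'| by rewrite eqD.
have := excess_identity (ltnW d2) dD' D2'.
rewrite eqD => idD' idD; split=> //; first exact: card_bdry_le.
by rewrite -eqD card_bdry_le.
Qed.

Lemma card_bdry_le_of_excess :
  excess d D <= excess d D' + (d - 2) -> #|` bdry d D| <= #|` bdry d D'|.
Proof. by case: identities; nia. Qed.

Lemma excess_le_of_card_bdry :
  #|` bdry d D| <= #|` bdry d D'| -> excess d D <= excess d D'.
Proof. by case: identities; nia. Qed.

End CompareDomains.

Lemma optimal_of_excess_le d D : 2 <= d -> domain d D -> 2 <= #|` D| ->
  excess d D <= d - 2 -> optimal d D.
Proof.
move=> d2 dD D2 small D' dD' eqD; apply: card_bdry_le_of_excess => //.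
exact: leq_trans small (leq_addl _ _).
Qed.

Lemma bdry_neq0 d D : 2 <= d -> domain d D -> bdry d D != fset0.
Proof.
move=> d2 [D0 vD cD]; apply/negP => /eqP bdry0.
have : \sum_(x <- D) d <= \sum_(x <- D) degD D x.
  rewrite big_seq [leqRHS]big_seq; apply: leq_sum => x xD.
  have : x \notin bdry d D by rewrite bdry0.
  by rewrite !inE xD -leqNgt.
rewrite sum_degD // big_const_seq iter_addn_0 count_predT.
by move: D0; rewrite -cardfs_gt0; nia.
Qed.

Lemma exists_free_child d D v : domain d D -> [::] \in D -> v \in D -> degD D v < d ->
  exists j, rcons v j \notin D /\ is_vertex d (rcons v j).
Proof.
move=> [D0 vD cD] rootD vinD deg_lt; have v_vertex := allP vD v vinD.
case/boolP: (has (fun j => rcons v j \notin D) (iota 0 (nchildren d v))).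
  case/hasP => j; rewrite mem_iota add0n => /andP [_ j_lt] jD.
  by exists j; rewrite is_vertex_rcons v_vertex j_lt.
move/hasPn => children_in; exfalso; move: deg_lt; rewrite ltnNge => /negP; apply.
have children : nchildren d v <= count (parent_of v) D.
  rewrite -size_filter -[nchildren d v](size_iota 0) -(size_map (rcons v)).
  apply: uniq_leq_size.
    rewrite map_inj_uniq ?iota_uniq // => a b /eqP.
    by rewrite eqseq_rcons => /andP [_ /eqP].
  move=> y /mapP [j /children_in jD ->].
  by rewrite mem_filter parent_of_rcons -[_ \in _]negbK.
rewrite degD_count count_adj; case: v vinD {v_vertex children_in} children => [|a s] vinD.
  by rewrite count_parent_root addn0.
have [p pD pv] := exists_parent_in cD rootD (fun z _ => leq0n (size z)) vinD isT.
have : 0 < count (parent_of^~ (a :: s)) D by rewrite -has_count; apply/hasP; exists p.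
rewrite /nchildren; lia.
Qed.

Lemma adj_new_child D v j : connected_in D -> [::] \in D -> rcons v j \notin D ->
  forall y, y \in D -> adj (rcons v j) y = (y == v).
Proof.
move=> cD rootD wD y yD; have [->|yv] := eqVneq y v.
  by rewrite /adj parent_of_rcons orbT.
apply/negP; case/orP => h.
  have y_root : y != [::] by apply/eqP => y0; have := parent_of_size h; rewrite y0.
  have [p pD /parent_of_uniq/(_ h) pw] :=
    exists_parent_in cD rootD (fun z _ => leq0n (size z)) yD y_root.
  by rewrite -pw pD in wD.
by rewrite (parent_of_uniq h (parent_of_rcons v j)) eqxx in yv.
Qed.

Section AddLeaf.

Variables (D : {fset vertex}) (v w : vertex).
Hypotheses (vD : v \in D) (wD : w \notin D)
  (w_nbrs : forall y, y \in D -> adj w y = (y == v)).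

Lemma degD_fsetU1 x : x \in D -> degD (w |` D) x = (x == v) + degD D x.
Proof.
move=> xD; rewrite !degD_count -!sum1_count big_mkcond big_fsetU1 //= -big_mkcond.
by rewrite adj_sym w_nbrs //; case: (x == v).
Qed.

Lemma degD_fsetU1_new : degD (w |` D) w = 1.
Proof.
rewrite degD_count -sum1_count big_mkcond big_fsetU1 //= adj_irr add0n -big_mkcond.
by rewrite sum1_count (eq_in_count w_nbrs) count_uniq_mem ?fset_uniq ?vD.
Qed.

Lemma resid_fsetU1 d : resid d (w |` D) `<=` v |` resid d D.
Proof.
apply/fsubsetP => x; rewrite !inE.
have [->|xw] := eqVneq x w; first by rewrite degD_fsetU1_new andbF.
have [//|xv] /= := eqVneq x v; case/andP=> /andP [xD].
by rewrite degD_fsetU1 // (negbTE xv) add0n xD => -> ->.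
Qed.

End AddLeaf.

Lemma domain_fsetU1 d D v w : domain d D -> v \in D -> is_vertex d w -> adj v w ->
  domain d (w |` D).
Proof.
move=> [D0 vD cD] vinD w_vertex vw; split.
- by apply/fset0Pn; exists w; rewrite fsetU11.
- by apply/allP => x; rewrite in_fset1U => /orP [/eqP ->|/(allP vD)].
have widen p : all (fun z => z \in D) p -> all (fun z => z \in w |` D) p.
  by apply: sub_all => z zD; rewrite in_fset1U zD orbT.
move=> x y; rewrite !in_fset1U => /orP [/eqP ->|xD] /orP [/eqP ->|yD].
- by exists [::].
- have [p [pp <- pD]] := cD v y vinD yD.
  by exists (v :: p); rewrite /= adj_sym vw in_fset1U vinD orbT widen.
- have [p [pp lp pD]] := cD x v xD vinD.
  exists (rcons p w); rewrite rcons_path pp lp vw last_rcons all_rcons fsetU11.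
  by rewrite widen.
- by have [p [pp lp pD]] := cD x y xD yD; exists p; rewrite widen.
Qed.

Lemma domain_grow d D : 2 <= d -> domain d D -> [::] \in D -> #|` resid d D| <= 1 ->
  exists w, [/\ w \notin D, domain d (w |` D) & #|` resid d (w |` D)| <= 1].
Proof.
move=> d2 dD rootD R1.
(* Attaching the leaf to a residual vertex, when there is one, creates no new
   residual vertex. *)
have [v v_bdry v_resid] :
    exists2 v, v \in bdry d D & resid d D != fset0 -> v \in resid d D.
  case: (eqVneq (resid d D) fset0) => [R0|/fset0Pn [v vR]].
    by have /fset0Pn [v vB] := bdry_neq0 d2 dD; exists v; rewrite // R0 eqxx.
  by exists v => //; move: vR; rewrite inE => /andP [].
move: v_bdry; rewrite inE => /andP [vD deg_lt].
have [j [wD w_vertex]] := exists_free_child dD rootD vD deg_lt.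
have [_ _ cD] := dD; have w_nbrs := adj_new_child cD rootD wD.
exists (rcons v j); split => //.
  by apply: domain_fsetU1 dD vD w_vertex _; rewrite /adj parent_of_rcons.
apply: leq_trans (fsubset_leq_card (resid_fsetU1 vD wD w_nbrs d)) _.
by rewrite cardfsU1; case: (eqVneq (resid d D) fset0) => [->|/v_resid ->].
Qed.

Lemma exists_domain_resid_le1 d k : 2 <= d ->
  exists D, [/\ domain d D, #|` D| = k.+1, [::] \in D & #|` resid d D| <= 1].
Proof.
move=> d2; elim: k => [|k [D [dD Dk rootD R1]]].
  exists [fset [::]]; rewrite cardfs1 inE; split => //.
    split; first by apply/fset0Pn; exists [::]; rewrite inE.
      by apply/allP => x; rewrite inE => /eqP ->.
    by move=> x y; rewrite !inE => /eqP -> /eqP ->; exists [::].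
  rewrite -(cardfs1 ([::] : vertex)); apply: leq_trans (card_bdry_le d _).
  by apply: fsubset_leq_card; rewrite /resid fset_sub.
have [w [wD dDw Rw]] := domain_grow d2 dD rootD R1.
by exists (w |` D); rewrite cardfsU1 wD Dk in_fset1U rootD orbT.
Qed.

Theorem mainTheorem9 (d : nat) (hd : 2 <= d) :
  [/\ (forall D, domain d D -> #|` D| <= d -> optimal d D),
      (forall D, domain d D -> 2 <= #|` D| -> full d D -> optimal d D),
      (forall D, domain d D -> 2 <= #|` D| -> #|` resid d D| = 1 -> optimal d D)
    & (forall D, domain d D -> 2 <= #|` D| -> optimal d D -> #|` resid d D| <= d - 2)].
Proof.
have excess_le D : #|` resid d D| <= 1 -> excess d D <= d - 2.
  move=> R1; apply: leq_trans (excess_le_card_resid d D) _.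
  by rewrite -[leqRHS]muln1 leq_mul2l R1 orbT.
split.
- by move=> D _ Dd D' _ eqD; rewrite !bdry_small ?eqD.
- move=> D dD D2 fullD; apply: optimal_of_excess_le => //.
  by apply: excess_le; rewrite fullD cardfs0.
- move=> D dD D2 R1; apply: optimal_of_excess_le => //.
  by apply: excess_le; rewrite R1.
- move=> D dD D2 optD.
  have [D' [dD' eqD _ R1]] := exists_domain_resid_le1 (#|` D|).-1 hd.
  rewrite prednK ?(leq_trans _ D2) // in eqD.
  apply: leq_trans (card_resid_le_excess d D) (leq_trans _ (excess_le D' R1)).
  exact: excess_le_of_card_bdry hd dD dD' D2 eqD (optD D' dD' eqD).
Qed.
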